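(* Let $n\geq 1$ and let $C_n\subset A^n$ be an arbitrary nonempty set. Write $D=E_{P^n}[\rho_n(X_1^n,C_n)]$, where $X_1^n=(X_1,\dots,X_n)$ has the product distribution $P^n$. Then $$\frac{1}{n}\log M^n(C_n)\geq R(D).$$
   Context: Setting: $A$ is a finite set; $P$ is a probability mass function on $A$ with $P(a)>0$ for all $a\in A$; $\rho:A\times A\to[0,\infty)$ is a function such that for each $a\in A$ there is $b\in A$ with $\rho(a,b)=0$; $M:A\to(0,\infty)$ is an arbitrary positive ''mass'' function. For $n\geq1$ and $x_1^n=(x_1,\dots,x_n),y_1^n\in A^n$, $\rho_n(x_1^n,y_1^n)=\frac1n\sum_{i=1}^n\rho(x_i,y_i)$; $M^n(y_1^n)=\prod_{i=1}^n M(y_i)$ and $M^n(C)=\sum_{y_1^n\in C}M^n(y_1^n)$ for $C\subset A^n$; $P^n$ is the product distribution on $A^n$. For $C\subset A^n$, $\rho_n(x_1^n,C)=\min_{y_1^n\in C}\rho_n(x_1^n,y_1^n)$. Logarithms are natural. For probability mass functions $\mu,\nu$ on a finite set $S$, $H(\mu\|\nu)=\sum_s\mu(s)\log\frac{\mu(s)}{\nu(s)}$. For a probability measure $Q$ on $A$ and $D\geq0$, ${\cal M}(P,Q,D)$ is the set of probability measures $W$ on $A\times A$ with first marginal $P$, second marginal $Q$, and $E_W[\rho(X,Y)]\leq D$; $I(P,Q,D)=\inf_{W\in{\cal M}(P,Q,D)}H(W\|P\times Q)$ (equal to $+\infty$ if the set is empty). The rate function is $R(D)=R(D;P,M)=\inf_Q\{I(P,Q,D)+E_Q[\log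 M(Y)]\}$, the infimum over all probability distributions $Q$ on $A$; equivalently $R(D)=\inf\{I(X;Y)+E[\log M(Y)]\}$ over jointly distributed $(X,Y)$ with $X\sim P$ and $E\rho(X,Y)\le D$, where $I(X;Y)$ is mutual information. *)

From mathcomp Require Import all_boot all_order all_algebra.
From mathcomp Require Import all_classical all_reals all_analysis.
Set Implicit Arguments. Unset Strict Implicit. Unset Printing Implicit Defensive.
Import Order.TTheory GRing.Theory Num.Theory.
Local Open Scope ring_scope.
Local Open Scope classical_set_scope.

Section Defs.
Variable R : realType.

Definition is_pmf (S : finType) (mu : S -> R) : Prop :=
  (forall s, 0 <= mu s) /\ \sum_s mu s = 1.

Definition KL (S : finType) (mu nu : S -> R) : R :=
  \sum_s (if mu s == 0 then 0 else mu s * ln (mu s / nu s)).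

Variable A : finType.

Definition couplings (rho : A -> A -> R) (P Q : A -> R) (D : R) : set (A * A -> R) :=
  [set W | is_pmf W
         /\ (forall a, \sum_b W (a, b) = P a)
         /\ (forall b, \sum_a W (a, b) = Q b)
         /\ \sum_ab W ab * rho ab.1 ab.2 <= D].

(* I(P,Q,D) = inf_{W in M(P,Q,D)} H(W || P x Q)  (+oo if empty) *)
Definition Irate (rho : A -> A -> R) (P Q : A -> R) (D : R) : \bar R :=
  ereal_inf [set (KL W (fun ab => P ab.1 * Q ab.2))%:E | W in couplings rho P Q D].

Definition Rrate (rho : A -> A -> R) (P M : A -> R) (D : R) : \bar R :=
  ereal_inf [set (Irate rho P Q D + (\sum_b Q b * ln (M b))%:E)%E
            | Q in [set Q : A -> R | is_pmf Q]].

Definition rhon (rho : A -> A -> R) (n : nat) (x y : n.-tuple A) : R :=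
  n%:R^-1 * \sum_(i < n) rho (tnth x i) (tnth y i).

Definition rhon_set (rho : A -> A -> R) (n : nat) (x : n.-tuple A)
    (C : {set n.-tuple A}) : R :=
  inf [set rhon rho x y | y in [set y : n.-tuple A | y \in C]].

Definition prodn (P : A -> R) (n : nat) (x : n.-tuple A) : R :=
  \prod_(i < n) P (tnth x i).

Definition massn (M : A -> R) (n : nat) (C : {set n.-tuple A}) : R :=
  \sum_(y in C) prodn M y.

Definition exp_dist (rho : A -> A -> R) (P : A -> R) (n : nat)
    (C : {set n.-tuple A}) : R :=
  \sum_(x : n.-tuple A) prodn P x * rhon_set rho x C.

End Defs.

From mathcomp Require Import all_boot all_order all_algebra.
From mathcomp Require Import all_classical all_reals all_analysis.
From mathcomp Require Import ring lra.
Set Implicit Arguments. Unset Strict Implicit. Unset Printing Implicit Defensive.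
Import Order.TTheory GRing.Theory Num.Theory.
Local Open Scope ring_scope.

(* Let f send each x to a nearest point of C, let W_i be the law of
   (X_i, f(X)_i) under P^n with output marginal Q_i, and let W, Q be their
   averages over i.  Then W couples P with Q at distortion D, so
   R(D) <= H(W || P x Q) + E_Q log M.  By convexity (the log-sum inequality)
   this is at most the average of H(W_i || P x Q_i) + E_{Q_i} log M, which is
   (1/n) E log G(X) for G(x) = prod_i W_i(x_i,y_i) M(y_i) / (P(x_i) Q_i(y_i)),
   y = f(x).  Jensen bounds it by (1/n) log E G(X), and E G(X) <= M^n(C)
   because, grouping x by y = f(x), the factors W_i(., y_i) / Q_i(y_i) are
   probability distributions. *)

Lemma sum_tuple_prod (R : comPzSemiRingType) (A : finType) (n : nat)
    (F : 'I_n -> A -> R) :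
  \sum_(x : n.-tuple A) \prod_i F i (tnth x i) = \prod_i \sum_a F i a.
Proof.
rewrite bigA_distr_bigA /= (reindex (fun x : n.-tuple A => [ffun i => tnth x i])).
  by apply: eq_bigr => x _; apply: eq_bigr => i _; rewrite ffunE.
exists (fun g : {ffun 'I_n -> A} => [tuple g i | i < n]).
  by move=> x _; apply: eq_from_tnth => i; rewrite tnth_mktuple ffunE.
by move=> g _; apply/ffunP => i; rewrite ffunE tnth_mktuple.
Qed.

Section LogInequalities.
Variable R : realType.

Lemma ln_le_subr1 (x : R) : 0 < x -> ln x <= x - 1.
Proof.
move=> x_gt0; have := @le_ln1Dx R (x - 1).
by rewrite addrCA subrr addr0; apply; lra.
Qed.

Lemma ln_prod (I : finType) (F : I -> R) : (forall i, 0 < F i) ->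
  ln (\prod_i F i) = \sum_i ln (F i).
Proof.
move=> F_gt0; pose K (x y : R) := 0 < x /\ ln x = y.
suff [] : K (\prod_i F i) (\sum_i ln (F i)) by [].
apply: (big_rec2 K); first by split; [exact: ltr01 | exact: ln1].
by move=> i x _ _ [x_gt0 <-]; split; [exact: mulr_gt0 | rewrite lnM ?posrE].
Qed.

Lemma mulr_ln_le (w q c : R) : 0 <= w -> 0 <= q -> 0 < c -> (0 < w -> 0 < q) ->
  w * ln c <= w * ln (w / q) + (c * q - w).
Proof.
move=> w_ge0 q_ge0 c_gt0 wq; have [<-|w_gt0] := eqVneq 0 w.
  by rewrite !mul0r add0r subr0; exact: mulr_ge0 (ltW c_gt0) q_ge0.
have {}w_gt0 : 0 < w by rewrite lt_def eq_sym w_gt0.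
have q_gt0 := wq w_gt0.
have := ln_le_subr1 (divr_gt0 c_gt0 (divr_gt0 w_gt0 q_gt0)).
rewrite [ln (c / _)]ln_div ?posrE ?divr_gt0 // => /(ler_wpM2l (ltW w_gt0)).
have -> : w * (c / (w / q) - 1) = c * q - w.
  by field; rewrite ?gt_eqF.
rewrite mulrBr; lra.
Qed.

Lemma log_sum_ineq (I : finType) (w q : I -> R) :
  (forall i, 0 <= w i) -> (forall i, 0 <= q i) -> (forall i, 0 < w i -> 0 < q i) ->
  (\sum_i w i) * ln ((\sum_i w i) / (\sum_i q i)) <= \sum_i w i * ln (w i / q i).
Proof.
move=> w_ge0 q_ge0 wq; set S := \sum_i w i; set T := \sum_i q i.
have [S0|/eqP/(psumr_neq0P (fun i _ => w_ge0 i))[i0 /= w0_gt0]] := eqVneq S 0.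
  rewrite S0 mul0r; apply: sumr_ge0 => i _.
  by rewrite (psumr_eq0P (fun i _ => w_ge0 i) S0) // mul0r.
have S_gt0 : 0 < S by rewrite /S (bigD1 i0) //= ltr_pwDl ?sumr_ge0.
have T_gt0 : 0 < T by rewrite /T (bigD1 i0) //= ltr_pwDl ?sumr_ge0 ?wq.
have : \sum_i w i * ln (S / T) <= \sum_i (w i * ln (w i / q i) + (S / T * q i - w i)).
  by apply: ler_sum => i _; exact: mulr_ln_le (w_ge0 i) (q_ge0 i) (divr_gt0 S_gt0 T_gt0) (@wq i).
rewrite -mulr_suml -/S big_split /= sumrB -mulr_sumr -/S -/T.
by rewrite divfK ?gt_eqF // subrr addr0.
Qed.

Lemma sum_pmf_mul_gt0 (T : finType) (p g : T -> R) :
  (forall t, 0 < p t) -> \sum_t p t = 1 -> (forall t, 0 < g t) ->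
  0 < \sum_t p t * g t.
Proof.
move=> p_gt0 p1 g_gt0.
have [t0 _] : exists t, true && (0 < p t).
  by apply: psumr_neq0P => [t _|]; [exact: ltW | rewrite p1; exact/eqP/oner_neq0].
rewrite (bigD1 t0) //= ltr_pwDl ?mulr_gt0 ?sumr_ge0 // => t _.
exact/ltW/mulr_gt0.
Qed.

Lemma jensen_ln (T : finType) (p g : T -> R) :
  (forall t, 0 < p t) -> \sum_t p t = 1 -> (forall t, 0 < g t) ->
  \sum_t p t * ln (g t) <= ln (\sum_t p t * g t).
Proof.
move=> p_gt0 p1 g_gt0.
have := @log_sum_ineq _ p (fun t => p t * g t) (fun t => ltW (p_gt0 t))
  (fun t => ltW (mulr_gt0 (p_gt0 t) (g_gt0 t))) (fun t _ => mulr_gt0 (p_gt0 t) (g_gt0 t)).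
rewrite p1 mul1r div1r lnV ?posrE ?sum_pmf_mul_gt0 //.
have termE t : p t * ln (p t / (p t * g t)) = - (p t * ln (g t)).
  by rewrite invfM mulrA mulfV ?gt_eqF // mul1r lnV ?posrE // mulrN.
by rewrite (eq_bigr _ (fun t _ => termE t)) sumrN lerN2.
Qed.
End LogInequalities.

Lemma prodn_gt0 (R : realType) (A : finType) (P : A -> R) (n : nat) (x : n.-tuple A) :
  (forall a, 0 < P a) -> 0 < prodn P x.
Proof. by move=> P_gt0; apply: prodr_gt0 => i _. Qed.

Lemma sum_prodn (R : realType) (A : finType) (P : A -> R) (n : nat) :
  is_pmf P -> \sum_(x : n.-tuple A) prodn P x = 1.
Proof. by move=> [_ P1]; rewrite /prodn (sum_tuple_prod (fun _ => P)) big1. Qed.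

Lemma KL_sum (R : realType) (S : finType) (mu nu : S -> R) :
  KL mu nu = \sum_s mu s * ln (mu s / nu s).
Proof. by apply: eq_bigr => s _; case: eqP => [->|]; rewrite ?mul0r. Qed.

Section QuantizerCoupling.
Variables (R : realType) (A : finType) (P : A -> R) (n : nat).
Variable f : n.-tuple A -> n.-tuple A.
Hypotheses (P_pmf : is_pmf P) (P_gt0 : forall a, 0 < P a) (n_gt0 : (0 < n)%N).

Definition coord_joint (i : 'I_n) (ab : A * A) : R :=
  \sum_(x | (tnth x i == ab.1) && (tnth (f x) i == ab.2)) prodn P x.

Definition coord_out (i : 'I_n) (b : A) : R := \sum_a coord_joint i (a, b).

Definition avg_joint (ab : A * A) : R := n%:R^-1 * \sum_i coord_joint i ab.

Definition avg_out (b : A) : R := n%:R^-1 * \sum_i coord_out i b.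

Lemma coord_joint_ge0 i ab : 0 <= coord_joint i ab.
Proof. by apply: sumr_ge0 => x _; exact/ltW/prodn_gt0. Qed.

Lemma coord_out_ge0 i b : 0 <= coord_out i b.
Proof. by apply: sumr_ge0 => a _; exact: coord_joint_ge0. Qed.

Lemma coord_joint_gt0 i x : 0 < coord_joint i (tnth x i, tnth (f x) i).
Proof.
rewrite /coord_joint (bigD1 x) ?eqxx //= ltr_pwDl ?prodn_gt0 //.
by apply: sumr_ge0 => y _; exact/ltW/prodn_gt0.
Qed.

Lemma coord_joint_le_out i a b : coord_joint i (a, b) <= coord_out i b.
Proof.
rewrite /coord_out (bigD1 a) //= lerDl.
by apply: sumr_ge0 => c _; exact: coord_joint_ge0.
Qed.

Lemma coord_out_gt0 i x : 0 < coord_out i (tnth (f x) i).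
Proof. exact: lt_le_trans (coord_joint_gt0 i x) (coord_joint_le_out _ _ _). Qed.

Lemma sum_coord_joint i (g : A * A -> R) :
  \sum_ab coord_joint i ab * g ab = \sum_x prodn P x * g (tnth x i, tnth (f x) i).
Proof.
rewrite [RHS](partition_big (fun x => (tnth x i, tnth (f x) i)) predT) //=.
apply: eq_bigr => -[a b] _; rewrite /coord_joint mulr_suml.
by apply: eq_big => [x|x]; [rewrite xpair_eqE | move=> /andP[/eqP-> /eqP->]].
Qed.

Lemma coord_joint_marg1 i a : \sum_b coord_joint i (a, b) = P a.
Proof.
have -> : \sum_b coord_joint i (a, b) = \sum_(x | tnth x i == a) prodn P x.
  by rewrite [RHS](partition_big (fun x => tnth (f x) i) predT).
have -> : P a = \prod_j \sum_c (if j == i then P c * (c == a)%:R else P c).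
  rewrite (bigD1 i) //= eqxx [X in _ * X]big1 => [|j /negbTE ->]; last exact: P_pmf.2.
  by rewrite mulr1 (bigD1 a) //= eqxx mulr1 big1 ?addr0 // => c /negbTE ->; rewrite mulr0.
rewrite big_mkcond -sum_tuple_prod; apply: eq_bigr => x _.
rewrite /prodn (bigD1 i) //= [in RHS](bigD1 i) //= eqxx.
rewrite [in RHS](eq_bigr (fun j => P (tnth x j))) => [|j /negbTE -> //].
by case: (tnth x i == a); rewrite ?mulr1 ?mulr0 ?mul0r.
Qed.

Lemma avg_const (c : R) : n%:R^-1 * \sum_(i < n) c = c.
Proof.
by rewrite sumr_const card_ord -[c *+ n]mulr_natl mulrA mulVf ?mul1r // pnatr_eq0 -lt0n.
Qed.

Lemma sum_avg_joint (g : A * A -> R) : \sum_ab avg_joint ab * g ab =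
  n%:R^-1 * \sum_i \sum_x prodn P x * g (tnth x i, tnth (f x) i).
Proof.
rewrite /avg_joint; under eq_bigr do rewrite -mulrA mulr_suml.
rewrite -mulr_sumr exchange_big /=; congr (_ * _).
by apply: eq_bigr => i _; exact: sum_coord_joint.
Qed.

Lemma avg_joint_pmf : is_pmf avg_joint.
Proof.
split=> [ab|].
  by rewrite mulr_ge0 ?invr_ge0 ?ler0n ?sumr_ge0 // => i _; exact: coord_joint_ge0.
have := sum_avg_joint (fun _ => 1); under eq_bigr do rewrite mulr1.
move=> ->; under eq_bigr do under eq_bigr do rewrite mulr1.
by under eq_bigr do rewrite sum_prodn //; exact: avg_const.
Qed.

Lemma avg_joint_marg1 a : \sum_b avg_joint (a, b) = P a.
Proof.
rewrite /avg_joint -mulr_sumr exchange_big /=.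
by under eq_bigr do rewrite coord_joint_marg1; exact: avg_const.
Qed.

Lemma avg_joint_marg2 b : \sum_a avg_joint (a, b) = avg_out b.
Proof. by rewrite /avg_joint /avg_out -mulr_sumr exchange_big. Qed.

Lemma avg_out_pmf : is_pmf avg_out.
Proof.
split=> [b|].
  by rewrite mulr_ge0 ?invr_ge0 ?ler0n ?sumr_ge0 // => i _; exact: coord_out_ge0.
under eq_bigr do rewrite -avg_joint_marg2.
by rewrite exchange_big /=; under eq_bigr do rewrite avg_joint_marg1; exact: P_pmf.2.
Qed.

Lemma avg_joint_coupling (rho : A -> A -> R) (D : R) :
  \sum_x prodn P x * rhon rho x (f x) <= D ->
  couplings rho P avg_out D avg_joint.
Proof.
move=> le_D; split; first exact: avg_joint_pmf.
split; first exact: avg_joint_marg1.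
split; first exact: avg_joint_marg2.
suff -> : \sum_ab avg_joint ab * rho ab.1 ab.2 = \sum_x prodn P x * rhon rho x (f x) by [].
rewrite sum_avg_joint exchange_big /= mulr_sumr; apply: eq_bigr => x _.
by rewrite /rhon -mulr_sumr mulrCA.
Qed.

Variables (M : A -> R) (C : {set n.-tuple A}).
Hypotheses (M_gt0 : forall a, 0 < M a) (fC : forall x, f x \in C).

Lemma KL_avg_joint_le : KL avg_joint (fun ab => P ab.1 * avg_out ab.2) <=
  n%:R^-1 * \sum_i \sum_ab coord_joint i ab * ln (coord_joint i ab / (P ab.1 * coord_out i ab.2)).
Proof.
rewrite KL_sum exchange_big mulr_sumr /=; apply: ler_sum => -[a b] _ /=.
have -> : avg_joint (a, b) / (P a * avg_out b) =
    (\sum_i coord_joint i (a, b)) / (\sum_i P a * coord_out i b).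
  rewrite /avg_joint /avg_out mulrCA -mulr_sumr invfM mulrACA mulfV ?mul1r //.
  by rewrite invr_neq0 // pnatr_eq0 -lt0n.
rewrite /avg_joint -mulrA ler_pM2l ?invr_gt0 ?ltr0n //.
apply: log_sum_ineq => [i|i|i w_gt0]; first exact: coord_joint_ge0.
  by rewrite mulr_ge0 ?coord_out_ge0 ?ltW.
by rewrite mulr_gt0 ?(lt_le_trans w_gt0 (coord_joint_le_out i a b)).
Qed.

Lemma sum_avg_out_ln : \sum_b avg_out b * ln (M b) =
  n%:R^-1 * \sum_i \sum_ab coord_joint i ab * ln (M ab.2).
Proof.
rewrite /avg_out; under eq_bigr do rewrite -mulrA mulr_suml.
rewrite -mulr_sumr exchange_big /=; congr (_ * _); apply: eq_bigr => i _.
rewrite /coord_out; under eq_bigr do rewrite mulr_suml.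
by rewrite exchange_big /= pair_bigA.
Qed.

Definition weight (i : 'I_n) (ab : A * A) : R :=
  coord_joint i ab / (P ab.1 * coord_out i ab.2) * M ab.2.

Definition tuple_weight (x : n.-tuple A) : R :=
  \prod_i weight i (tnth x i, tnth (f x) i).

Lemma weight_gt0 i x : 0 < weight i (tnth x i, tnth (f x) i).
Proof. by rewrite mulr_gt0 ?divr_gt0 ?mulr_gt0 ?coord_joint_gt0 ?coord_out_gt0. Qed.

Lemma tuple_weight_gt0 x : 0 < tuple_weight x.
Proof. by apply: prodr_gt0 => i _; exact: weight_gt0. Qed.

Lemma sum_ln_tuple_weight :
  \sum_i \sum_ab coord_joint i ab * ln (coord_joint i ab / (P ab.1 * coord_out i ab.2)) +
  \sum_i \sum_ab coord_joint i ab * ln (M ab.2) =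
  \sum_x prodn P x * ln (tuple_weight x).
Proof.
rewrite -big_split /=; under eq_bigr do rewrite -big_split /=.
under eq_bigr do under eq_bigr do rewrite -mulrDr.
under eq_bigr do rewrite sum_coord_joint.
rewrite exchange_big /=; apply: eq_bigr => x _.
rewrite -mulr_sumr ln_prod => [|i]; last exact: weight_gt0.
congr (_ * _); apply: eq_bigr => i _ /=.
by rewrite [in RHS]lnM ?posrE ?divr_gt0 ?mulr_gt0 ?coord_joint_gt0 ?coord_out_gt0.
Qed.

Lemma sum_tuple_weight_le : \sum_x prodn P x * tuple_weight x <= massn M C.
Proof.
pose cond y x := \prod_i (coord_joint i (tnth x i, tnth y i) / coord_out i (tnth y i)).
have tuple_weightE x : prodn P x * tuple_weight x = prodn M (f x) * cond (f x) x.
  rewrite /prodn /tuple_weight /cond -!big_split /=; apply: eq_bigr => i _.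
  have := P_gt0 (tnth x i); have := coord_out_gt0 i x => q_gt0 p_gt0.
  by rewrite /weight; field; rewrite ?gt_eqF.
under eq_bigr do rewrite tuple_weightE.
rewrite (partition_big f (mem C)) //=; apply: ler_sum => y yC.
rewrite (eq_bigr (fun x => prodn M y * cond y x)) => [|x /eqP-> //].
rewrite -mulr_sumr ger_pMr ?prodn_gt0 //.
have cond_ge0 x : 0 <= cond y x.
  by apply: prodr_ge0 => i _; rewrite divr_ge0 ?coord_joint_ge0 ?coord_out_ge0.
apply: (@le_trans _ _ (\sum_x cond y x)).
  by rewrite [X in X <= _]big_mkcond /=; apply: ler_sum => x _; case: ifP => _ //; exact: cond_ge0.
rewrite (sum_tuple_prod (fun i a => coord_joint i (a, tnth y i) / coord_out i (tnth y i))).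
apply: prodr_ile1 => i _; rewrite -mulr_suml -/(coord_out i (tnth y i)).
by have [->|?] := eqVneq (coord_out i (tnth y i)) 0; rewrite ?mul0r ?mulfV ?lexx ?ler01.
Qed.

Lemma avg_joint_rate_le :
  KL avg_joint (fun ab => P ab.1 * avg_out ab.2) + \sum_b avg_out b * ln (M b)
  <= n%:R^-1 * ln (massn M C).
Proof.
apply: le_trans (lerD KL_avg_joint_le (lexx _)) _.
rewrite sum_avg_out_ln -mulrDr sum_ln_tuple_weight ler_wpM2l ?invr_ge0 ?ler0n //.
have Pn_gt0 (x : n.-tuple A) : 0 < prodn P x by exact: prodn_gt0.
have PG_gt0 := sum_pmf_mul_gt0 Pn_gt0 (sum_prodn n P_pmf) tuple_weight_gt0.
apply: le_trans (jensen_ln Pn_gt0 (sum_prodn n P_pmf) tuple_weight_gt0) _.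
by rewrite ler_ln ?posrE ?sum_tuple_weight_le ?(lt_le_trans PG_gt0 sum_tuple_weight_le).
Qed.

End QuantizerCoupling.

Lemma Rrate_le_coupling (R : realType) (A : finType) (rho : A -> A -> R)
    (P M Q : A -> R) (D : R) (W : A * A -> R) :
  is_pmf Q -> couplings rho P Q D W ->
  (Rrate rho P M D <= (KL W (fun ab => P ab.1 * Q ab.2) + \sum_b Q b * ln (M b))%:E)%E.
Proof.
move=> Q_pmf W_cpl; apply: (@le_trans _ _ (Irate rho P Q D + (\sum_b Q b * ln (M b))%:E)%E).
  by apply: ereal_inf_lbound; exists Q.
by rewrite EFinD leeD2r //; apply: ereal_inf_lbound; exists W.
Qed.

Lemma exists_nearest_point (R : realType) (A : finType) (rho : A -> A -> R) (n : nat)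
    (C : {set n.-tuple A}) :
  C != finset.set0 -> exists2 f : n.-tuple A -> n.-tuple A,
    forall x, f x \in C & forall x, rhon rho x (f x) <= rhon_set rho x C.
Proof.
move=> /set0Pn[y0 y0C].
exists (fun x => [arg min_(y < y0 in C) rhon rho x y]%O) => x; first by case: arg_minP.
apply: lb_le_inf; first by exists (rhon rho x y0), y0.
by move=> _ [y yC <-]; case: arg_minP => // z _; apply.
Qed.

Theorem theorem1 (R : realType) (A : finType) (P : A -> R)
    (rho : A -> A -> R) (M : A -> R) (n : nat) (C : {set n.-tuple A}) :
  is_pmf P -> (forall a, 0 < P a) ->
  (forall a b, 0 <= rho a b) -> (forall a, exists b, rho a b = 0) ->
  (forall a, 0 < M a) ->
  (0 < n)%N -> C != finset.set0 ->
  (Rrate rho P M (exp_dist rho P C) <= (n%:R^-1 * ln (massn M C))%:E)%E.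
Proof.
move=> P_pmf P_gt0 _ _ M_gt0 n_gt0 /(exists_nearest_point rho)[f fC f_min].
have dist_le : \sum_x prodn P x * rhon rho x (f x) <= exp_dist rho P C.
  by apply: ler_sum => x _; rewrite ler_wpM2l ?f_min // ltW ?prodn_gt0.
apply: le_trans (Rrate_le_coupling M (avg_out_pmf f P_pmf P_gt0 n_gt0)
  (avg_joint_coupling P_pmf P_gt0 n_gt0 dist_le)) _.
by rewrite lee_fin; exact: avg_joint_rate_le.
Qed.
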